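(* Let $m\ge2$ and let $\mathcal{A}\in\mathbb{T}_{m,n}$ be a circulant tensor with root tensor $\mathcal{A}_1$. If $\mathcal{A}_1$ is copositive (respectively strictly copositive), then $\mathcal{A}$ is copositive (respectively strictly copositive). Moreover, if $\mathcal{A}$ is doubly circulant, then $\mathcal{A}$ is copositive (respectively strictly copositive) if and only if $\mathcal{A}_1$ is copositive (respectively strictly copositive).
   Context: $\mathbb{T}_{m,n}$ is the space of real $m$th order $n$-dimensional tensors $\mathcal{A}=(a_{i_1\ldots i_m})$, $i_j\in[n]$. For $\mathcal{A}\in\mathbb{T}_{m,n}$ and $x\in\mathbb{R}^n$, $\mathcal{A}x^m=\sum_{i_1,\dots,i_m}a_{i_1\ldots i_m}x_{i_1}\cdots x_{i_m}$. $\mathcal{A}$ is copositive if $\mathcal{A}x^m\ge0$ for all $x\in\mathbb{R}^n_+$, and strictly copositive if $\mathcal{A}x^m>0$ for all $x\in\mathbb{R}^n_+\setminus\{0\}$ (same definitions in $\mathbb{T}_{m-1,n}$). $\mathcal{A}$ is circulant if $a_{i_1\ldots i_m}=a_{k_1\ldots k_m}$ whenever $k_j\equiv i_j+1 \pmod n$ with $k_j\in[n]$ for all $j$. The $k$th row tensor $\mathcal{A}_k\in\mathbb{T}_{m-1,n}$ has entries $(\mathcal{A}_k)_{j_1\ldots j_{m-1}}=a_{kj_1\ldots j_{m-1}}$; $\mathcal{A}_1$ is the root tensor. A circulant tensor is doubly circulant if all its row tensors coincide with its root tensor, i.e. $\mathcal{A}_k=\mathcal{A}_1$ for all $k\in[n]$.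 *)

From HB Require Import structures.
From mathcomp Require Import all_boot all_order all_algebra.
Set Implicit Arguments. Unset Strict Implicit. Unset Printing Implicit Defensive.
Import Order.TTheory GRing.Theory Num.Theory.
Local Open Scope ring_scope.

(* A real m-th order n-dimensional tensor: entries indexed by m-tuples of
   indices in [n] = 'I_n (index i of the paper is the ordinal i-1). *)
Definition tensor (R : realFieldType) (m n : nat) := m.-tuple 'I_n -> R.

Definition tpoly (R : realFieldType) (m n : nat) (A : tensor R m n) (x : 'I_n -> R) : R :=
  \sum_(t : m.-tuple 'I_n) A t * \prod_(j < m) x (tnth t j).

Definition nonneg_vec (R : realFieldType) (n : nat) (x : 'I_n -> R) : Prop :=
  forall i, 0 <= x i.

Definition copositive (R : realFieldType) (m n : nat) (A : tensor R m n) : Prop :=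
  forall x : 'I_n -> R, nonneg_vec x -> 0 <= tpoly A x.

Definition strictly_copositive (R : realFieldType) (m n : nat) (A : tensor R m n) : Prop :=
  forall x : 'I_n -> R, nonneg_vec x -> (exists i, x i != 0) -> 0 < tpoly A x.

Definition circulant (R : realFieldType) (m n : nat) (A : tensor R m n) : Prop :=
  forall t : m.-tuple 'I_n, A t = A [tuple of map (@ordS n) t].

Definition row_tensor (R : realFieldType) (m n : nat) (A : tensor R m.+1 n) (k : 'I_n)
  : tensor R m n := fun t => A [tuple of k :: t].

(* root tensor A_1 (index 1 of the paper = ordinal 0) *)
Definition root_tensor (R : realFieldType) (m n : nat) (hn : (0 < n)%N)
  (A : tensor R m.+1 n) : tensor R m n := row_tensor A (Ordinal hn).

Definition doubly_circulant (R : realFieldType) (m n : nat) (hn : (0 < n)%N)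
  (A : tensor R m.+1 n) : Prop :=
  circulant A /\ forall k : 'I_n, forall t, row_tensor A k t = root_tensor hn A t.

From HB Require Import structures.
From mathcomp Require Import all_boot all_order all_algebra.
From mathcomp Require Import lra.
Set Implicit Arguments. Unset Strict Implicit. Unset Printing Implicit Defensive.
Import Order.TTheory GRing.Theory Num.Theory.
Local Open Scope ring_scope.

(* Expanding along the first index gives A x^(m+1) = sum_k x_k (A_k x^m).  For
   a circulant A, the row tensor A_k is the root tensor A_1 with its indices
   cyclically shifted, so A_k x^m = A_1 y^m for a permutation y of x; hence each
   summand inherits the sign of A_1 on the nonnegative orthant.  If moreover all
   rows coincide, A x^(m+1) = (sum_k x_k) A_1 x^m, and the converse follows since
   sum_k x_k > 0 for nonzero nonnegative x. *)

Section CyclicShift.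
Variable n : nat.

Lemma iter_ordS_val (i : 'I_n) j : val (iter j (@ordS n) i) = ((i + j) %% n)%N.
Proof.
elim: j => [|j IH] /=; first by rewrite addn0 modn_small.
by rewrite /ordS /= IH -addn1 modnDml addn1 addnS.
Qed.

Lemma iter_ordSK j : cancel (iter j (@ordS n)) (iter j (@ord_pred n)).
Proof. by elim: j => [//|j IH] i; rewrite iterSr iterS ordSK IH. Qed.

Lemma iter_ord_predK j : cancel (iter j (@ord_pred n)) (iter j (@ordS n)).
Proof. by elim: j => [//|j IH] i; rewrite iterSr iterS ord_predK IH. Qed.

End CyclicShift.

Section Relabel.
Variables (R : realFieldType) (m n : nat).

Lemma tpoly_eq_ext (B C : tensor R m n) x : B =1 C -> tpoly B x = tpoly C x.
Proof. by move=> eqBC; apply: eq_bigr => t _; rewrite eqBC. Qed.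

Definition tensor_relabel (f : 'I_n -> 'I_n) (C : tensor R m n) : tensor R m n :=
  fun t => C [tuple of map f t].

Lemma circulant_iter (A : tensor R m n) j :
  circulant A -> A =1 tensor_relabel (iter j (@ordS n)) A.
Proof.
move=> hA; elim: j => [|j IH] t.
  by rewrite /tensor_relabel; congr A; apply: val_inj; rewrite /= map_id.
rewrite IH /tensor_relabel hA; congr A; apply: val_inj.
by rewrite /= -map_comp.
Qed.

Variables (f g : 'I_n -> 'I_n).
Hypotheses (fK : cancel f g) (gK : cancel g f).

Lemma tpoly_relabel (C : tensor R m n) x :
  tpoly (tensor_relabel f C) x = tpoly C (x \o g).
Proof.
rewrite /tpoly (reindex (fun s : m.-tuple 'I_n => [tuple of map g s])) /=; last first.
  apply: onW_bij; exists (fun s : m.-tuple 'I_n => [tuple of map f s]).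
    by move=> s; apply: val_inj; rewrite /= -map_comp (eq_map gK) map_id.
  by move=> s; apply: val_inj; rewrite /= -map_comp (eq_map fK) map_id.
apply: eq_bigr => s _; congr (_ * _).
  rewrite /tensor_relabel; congr C; apply: val_inj.
  by rewrite /= -map_comp (eq_map gK) map_id.
by apply: eq_bigr => j _; rewrite tnth_map.
Qed.

Lemma copositive_relabel (C : tensor R m n) :
  copositive C -> copositive (tensor_relabel f C).
Proof. by move=> hC x hx; rewrite tpoly_relabel; apply: hC => i; apply: hx. Qed.

Lemma strictly_copositive_relabel (C : tensor R m n) :
  strictly_copositive C -> strictly_copositive (tensor_relabel f C).
Proof.
move=> hC x hx [i xi]; rewrite tpoly_relabel; apply: hC => [j|]; first exact: hx.
by exists (f i); rewrite /= fK.
Qed.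

End Relabel.

Section RowExpansion.
Variables (R : realFieldType) (m n : nat).
Implicit Type A : tensor R m.+1 n.

Lemma tpoly_rows A x : tpoly A x = \sum_(k : 'I_n) x k * tpoly (row_tensor A k) x.
Proof.
rewrite /tpoly (reindex (fun p : 'I_n * m.-tuple 'I_n => [tuple of p.1 :: p.2])) /=; last first.
  apply: onW_bij; exists (fun t : m.+1.-tuple 'I_n => (thead t, [tuple of behead t])).
    by case=> a t /=; congr pair; apply: val_inj.
  by move=> t /=; rewrite [RHS]tuple_eta.
rewrite -(pair_big xpredT xpredT (fun i (t : m.-tuple 'I_n) =>
   A [tuple of i :: t] * \prod_(j < m.+1) x (tnth [tuple of i :: t] j))) /=.
apply: eq_bigr => k _; rewrite mulr_sumr; apply: eq_bigr => t _.
rewrite big_ord_recl tnth0 mulrCA; congr (_ * (_ * _)).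
by apply: eq_bigr => j _; rewrite !(tnth_nth k).
Qed.

Lemma copositive_of_rows A :
  (forall k, copositive (row_tensor A k)) -> copositive A.
Proof.
move=> hA x hx; rewrite tpoly_rows; apply: sumr_ge0 => k _.
by apply: mulr_ge0; [exact: hx | exact: hA].
Qed.

Lemma strictly_copositive_of_rows A :
  (forall k, strictly_copositive (row_tensor A k)) -> strictly_copositive A.
Proof.
move=> hA x hx x_neq0; have [i xi] := x_neq0.
have term_ge0 k : 0 <= x k * tpoly (row_tensor A k) x.
  have [->|xk] := eqVneq (x k) 0; first by rewrite mul0r.
  by apply: mulr_ge0; [exact: hx | exact/ltW/hA].
have term_gt0 : 0 < x i * tpoly (row_tensor A i) x.
  by apply: mulr_gt0; [rewrite lt0r xi hx | exact: hA].
rewrite tpoly_rows (bigD1 i) //=.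
have : 0 <= \sum_(k | k != i) x k * tpoly (row_tensor A k) x by apply: sumr_ge0.
lra.
Qed.

(* The shift by n - k sends the leading index k to 0. *)
Lemma row_tensor_circulant (hn : (0 < n)%N) A (k : 'I_n) : circulant A ->
  row_tensor A k =1 tensor_relabel (iter (n - k) (@ordS n)) (root_tensor hn A).
Proof.
move=> hA t; rewrite /row_tensor (circulant_iter (n - k) hA).
congr A; apply: val_inj; congr cons; apply: val_inj.
by rewrite iter_ordS_val subnKC ?modnn // ltnW.
Qed.

Lemma copositive_circulant (hn : (0 < n)%N) A : circulant A ->
  copositive (root_tensor hn A) -> copositive A.
Proof.
move=> hA h1; apply: copositive_of_rows => k x hx.
rewrite (tpoly_eq_ext x (row_tensor_circulant hn k hA)).
exact: (copositive_relabel (iter_ordSK _) (iter_ord_predK _) h1 hx).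
Qed.

Lemma strictly_copositive_circulant (hn : (0 < n)%N) A : circulant A ->
  strictly_copositive (root_tensor hn A) -> strictly_copositive A.
Proof.
move=> hA h1; apply: strictly_copositive_of_rows => k x hx x_neq0.
rewrite (tpoly_eq_ext x (row_tensor_circulant hn k hA)).
exact: (strictly_copositive_relabel (iter_ordSK _) (iter_ord_predK _) h1 hx x_neq0).
Qed.

Lemma tpoly_equal_rows A (B : tensor R m n) x :
  (forall k, row_tensor A k =1 B) -> tpoly A x = (\sum_k x k) * tpoly B x.
Proof.
move=> rowsB; rewrite tpoly_rows mulr_suml; apply: eq_bigr => k _.
by rewrite (tpoly_eq_ext x (rowsB k)).
Qed.

End RowExpansion.

Lemma nonneg_vec_sum_gt0 (R : realFieldType) n (x : 'I_n -> R) :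
  nonneg_vec x -> (exists i, x i != 0) -> 0 < \sum_k x k.
Proof.
move=> hx [i xi]; have x_ge0 k : true -> 0 <= x k by move=> _; apply: hx.
rewrite lt_def psumr_neq0 // sumr_ge0 // andbT.
by apply/hasP; exists i; rewrite ?mem_index_enum // lt0r xi hx.
Qed.

Lemma tpoly_eq0 (R : realFieldType) m n (B : tensor R m n) x :
  (0 < m)%N -> (forall i, x i = 0) -> tpoly B x = 0.
Proof.
case: m B => // m B _ x0; apply: big1 => t _.
by rewrite big_ord_recl x0 mul0r mulr0.
Qed.

Section EqualRows.
Variables (R : realFieldType) (m n : nat).
Variables (A : tensor R m.+1 n) (B : tensor R m n).
Hypothesis rowsB : forall k, row_tensor A k =1 B.

Lemma copositive_equal_rows : (0 < m)%N -> copositive A -> copositive B.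
Proof.
move=> m_gt0 hA x hx; have [/existsP x_neq0|/existsPn x0] := boolP [exists i, x i != 0].
  rewrite -(pmulr_rge0 _ (nonneg_vec_sum_gt0 hx x_neq0)) -(tpoly_equal_rows x rowsB).
  exact: hA.
by rewrite tpoly_eq0 // => i; apply/eqP; rewrite -[_ == _]negbK x0.
Qed.

Lemma strictly_copositive_equal_rows : strictly_copositive A -> strictly_copositive B.
Proof.
move=> hA x hx x_neq0.
rewrite -(pmulr_rgt0 _ (nonneg_vec_sum_gt0 hx x_neq0)) -(tpoly_equal_rows x rowsB).
exact: hA.
Qed.

End EqualRows.

Theorem mainTheorem4 (R : realFieldType) (m n : nat) (hm : (1 <= m)%N) (hn : (0 < n)%N)
  (A : tensor R m.+1 n) (hA : circulant A) :
  (copositive (root_tensor hn A) -> copositive A) /\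
  (strictly_copositive (root_tensor hn A) -> strictly_copositive A) /\
  (doubly_circulant hn A ->
     (copositive A <-> copositive (root_tensor hn A)) /\
     (strictly_copositive A <-> strictly_copositive (root_tensor hn A))).
Proof.
have copA := copositive_circulant (hn:=hn) hA.
have scopA := strictly_copositive_circulant (hn:=hn) hA.
do 2!split=> //; case=> _ rowsA.
split; split=> //.
  exact: copositive_equal_rows.
exact: strictly_copositive_equal_rows.
Qed.
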